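(* Let $\mathcal{H}$ be a complex Hilbert space, let $A\in\mathcal{B}(\mathcal{H})$ be a nonzero positive operator, and let $\mathbb{A}=\begin{pmatrix}A&O\\O&A\end{pmatrix}$ on $\mathcal{H}\oplus\mathcal{H}$. Let $P,Q,R,S\in\mathcal{B}_{A^{1/2}}(\mathcal{H})$. Then $$\omega_{\mathbb{A}}\left[\begin{pmatrix}P&Q\\R&S\end{pmatrix}\right]\leq\max\{\omega_A(P),\omega_A(S)\}+\frac{\omega_A(Q+R)+\omega_A(Q-R)}{2}.$$
   Context: For a positive operator $A$ on $\mathcal{H}$, $\langle x,y\rangle_A:=\langle Ax,y\rangle$ and $\|x\|_A:=\sqrt{\langle x,x\rangle_A}$. $\mathcal{B}_{A^{1/2}}(\mathcal{H})$ is the set of $T\in\mathcal{B}(\mathcal{H})$ such that $\|Tx\|_A\le\lambda\|x\|_A$ for some $\lambda>0$ and all $x$. $\omega_A(T):=\sup\{|\langle Tx,x\rangle_A|:x\in\mathcal{H},\|x\|_A=1\}$. $\omega_{\mathbb{A}}$ is defined analogously on $\mathcal{H}\oplus\mathcal{H}$ with $\langle (x_1,x_2),(y_1,y_2)\rangle_{\mathbb{A}}=\langle x_1,y_1\rangle_A+\langle x_2,y_2\rangle_A$. *)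

From HB Require Import structures.
From mathcomp Require Import all_boot all_order all_algebra.
From mathcomp Require Import classical_sets reals.
From mathcomp.real_closed Require Import complex.
Set Implicit Arguments. Unset Strict Implicit. Unset Printing Implicit Defensive.
Import Order.TTheory GRing.Theory Num.Theory.
Local Open Scope ring_scope.
Local Open Scope classical_set_scope.

Section Hilbert.
Variables (R : realType) (H : lmodType R[i]).

Definition inner_product (ip : H -> H -> R[i]) : Prop :=
  [/\ forall (a : R[i]) (x y z : H), ip (a *: x + y) z = a * ip x z + ip y z,
      forall x y : H, ip y x = (ip x y)^*,
      forall x : H, 0 <= ip x x
    & forall x : H, ip x x = 0 -> x = 0].

Definition sqnorm (ip : H -> H -> R[i]) (x : H) : R := complex.Re (ip x x).

Definition ip_complete (ip : H -> H -> R[i]) : Prop :=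
  forall u : nat -> H,
    (forall e : R, 0 < e -> exists N : nat, forall m n : nat,
        (N <= m)%N -> (N <= n)%N -> sqnorm ip (u m - u n) < e) ->
    exists l : H, forall e : R, 0 < e -> exists N : nat, forall n : nat,
        (N <= n)%N -> sqnorm ip (u n - l) < e.

Definition hilbert_space (ip : H -> H -> R[i]) : Prop :=
  inner_product ip /\ ip_complete ip.

Definition bounded_op (ip : H -> H -> R[i]) (T : H -> H) : Prop :=
  (forall (a : R[i]) (x y : H), T (a *: x + y) = a *: T x + T y) /\
  exists M : R, forall x : H, sqnorm ip (T x) <= M ^+ 2 * sqnorm ip x.

Definition positive_op (ip : H -> H -> R[i]) (A : H -> H) : Prop :=
  bounded_op ip A /\ forall x : H, 0 <= ip (A x) x.

Definition ipA (ip : H -> H -> R[i]) (A : H -> H) (x y : H) : R[i] := ip (A x) y.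

Definition BA_half (ip : H -> H -> R[i]) (A : H -> H) (T : H -> H) : Prop :=
  bounded_op ip T /\
  exists lambda : R, 0 < lambda /\
    forall x : H, complex.Re (ipA ip A (T x) (T x)) <= lambda ^+ 2 * complex.Re (ipA ip A x x).

(* the semi-inner product on H (+) H induced by the diagonal operator [[A,0],[0,A]] *)
Definition ipAA (ip : H -> H -> R[i]) (A : H -> H) (x y : H * H) : R[i] :=
  ipA ip A x.1 y.1 + ipA ip A x.2 y.2.

Definition opmatrix (P Q R' S : H -> H) (x : H * H) : H * H :=
  (P x.1 + Q x.2, R' x.1 + S x.2).

End Hilbert.

Definition omega (R : realType) (V : Type) (sip : V -> V -> R[i]) (T : V -> V) : R :=
  sup [set Normc.normc (sip (T x) x) | x in [set x | sip x x = 1]].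

From HB Require Import structures.
From mathcomp Require Import all_boot all_order all_algebra sesquilinear.
From mathcomp Require Import classical_sets boolp reals ring.
From mathcomp.real_closed Require Import complex.
Import Order.TTheory GRing.Theory Num.Theory.
Local Open Scope complex_scope.
Local Open Scope ring_scope.

(* Write f x y = <A x, y>: a positive sesquilinear form on H, and omega_A T is the
   numerical radius of T for f.  For A-bounded T, |f (T x) x| <= omega_A T * f x x:
   normalise x when f x x > 0; when f x x = 0, boundedness gives f (T x) (T x) = 0 and
   |f u v| <= f u u + f v v concludes.  Polarising y |-> f (T y) y along u + c v and
   u - c v with |c| = 1 and applying the parallelogram law bounds
   |c^* f (T u) v + c f (T v) u| by omega_A T * (f u u + f v v).  For a unit vector
   (x1, x2) of H (+) H, twice the off-diagonal term f (Q x2) x1 + f (R x1) x2 is this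
   expression for T = Q + R, c = 1 plus 'i times it for T = Q - R, c = 'i (with u, v
   swapped), while the diagonal term is at most max (omega_A P) (omega_A S). *)

Definition form_bounded {K : realType} {V : Type} (f : V -> V -> K[i]) (T : V -> V) :=
  exists M : K, forall x, f (T x) (T x) <= M%:C * f x x.

Section NumericalRadius.
Variables (K : realType) (V : Type) (f : V -> V -> K[i]).

(* [sup] is [0] on sets without a supremum, empty ones included. *)
Lemma omega_ge0 (T : V -> V) : 0 <= omega f T.
Proof.
rewrite /omega; set E := (X in sup X).
have [[[y Ey] ubE] | /sup_out ->] := pselect (has_sup E); last by [].
apply: le_trans (ub_le_sup ubE Ey); case: Ey => x _ <-.
by case: (f (T x) x) => a b; rewrite /= sqrtr_ge0.
Qed.

Lemma omega_le (T : V -> V) (c : K) : 0 <= c ->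
  (forall x, f x x = 1 -> `|f (T x) x| <= c%:C) -> omega f T <= c.
Proof.
move=> c0 hc; rewrite /omega; set E := (X in sup X).
have [[neE _] | /sup_out ->] := pselect (has_sup E); last by [].
by apply: ge_sup => // _ [x /= fx1 <-]; rewrite -lecR; exact: hc.
Qed.

End NumericalRadius.

Section SesquilinearForm.
Variables (K : realType) (H : lmodType K[i]).
Variable f : {bilinear H -> H -> K[i] | *%R & Num.conj \; *%R}.
Hypothesis f_ge0 : forall x, 0 <= f x x.

Lemma form_parallelogram (c : K[i]) u v : c * c^* = 1 ->
  f (u + c *: v) (u + c *: v) + f (u - c *: v) (u - c *: v) = (f u u + f v v) *+ 2.
Proof.
rewrite !(linearDl, linearNl, linearZl_LR, linearDr, linearNr, linearZr_LR) /=.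
by move: c^* => d cd; ring: cd.
Qed.

Lemma form_polarization (T : {linear H -> H}) (c : K[i]) u v :
  f (T (u + c *: v)) (u + c *: v) - f (T (u - c *: v)) (u - c *: v)
  = (c^* * f (T u) v + c * f (T v) u) *+ 2.
Proof.
have -> : T (u + c *: v) = T u + c *: T v by rewrite linearD linearZ.
have -> : T (u - c *: v) = T u - c *: T v by rewrite linearB linearZ.
rewrite !(linearDl, linearNl, linearZl_LR, linearDr, linearNr, linearZr_LR) /=.
ring.
Qed.

Lemma normr_polarization_le {T : {linear H -> H}} {w : K} {c : K[i]} u v :
  (forall y, `|f (T y) y| <= w%:C * f y y) -> c * c^* = 1 ->
  `|c^* * f (T u) v + c * f (T v) u| <= w%:C * (f u u + f v v).
Proof.
move=> leT cc; rewrite -(ler_pMn2r (n := 2)) // -normrMn -form_polarization.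
apply: le_trans (ler_normB _ _) _.
by rewrite -mulrnAr -(form_parallelogram _ _ _ cc) mulrDr lerD.
Qed.

Lemma normr_form_le u v : `|f u v| <= f u u + f v v.
Proof.
have id_bound y : `|f (idfun y) y| <= 1%:C * f y y by rewrite mul1r ger0_norm.
have c1 : 1 * 1^* = 1 :> K[i] by rewrite conjC1 mulr1.
have ci : 'i * 'i^* = 1 :> K[i] by rewrite conjCi mulrN mulCii opprK.
have := @normr_polarization_le idfun 1 _ u v id_bound ci.
have := @normr_polarization_le idfun 1 _ u v id_bound c1.
rewrite /= conjC1 conjCi !mul1r => le1 lei.
rewrite -(ler_pMn2r (n := 2)) // -normrMn.
have -> : f u v *+ 2 = (f u v + f v u) + 'i * (- 'i * f u v + 'i * f v u).
  by rewrite mulrDr !mulrA mulrN mulCii opprK mulN1r mul1r addrACA subrr addr0 mulr2n.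
apply: le_trans (ler_normD _ _) _.
by rewrite normrM normCi mul1r mulr2n lerD.
Qed.

Lemma form_boundedD {T1 T2 : H -> H} :
  form_bounded f T1 -> form_bounded f T2 -> form_bounded f (T1 \+ T2).
Proof.
move=> [M1 le1] [M2 le2]; exists ((M1 + M2) *+ 2) => x /=.
have c1 : 1 * 1^* = 1 :> K[i] by rewrite conjC1 mulr1.
have le_para : f (T1 x + T2 x) (T1 x + T2 x) <= (f (T1 x) (T1 x) + f (T2 x) (T2 x)) *+ 2.
  by rewrite -(form_parallelogram 1 _ _ c1) !scale1r lerDl.
apply: le_trans le_para _.
by rewrite rmorphMn rmorphD /= mulrnAl lerMn2r mulrDl lerD ?le1 ?le2 ?orbT.
Qed.

Lemma form_boundedN {T : H -> H} : form_bounded f T -> form_bounded f (fun x => - T x).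
Proof. by move=> [M leM]; exists M => x; rewrite linearNl linearNr opprK. Qed.

Lemma form_boundedB {T1 T2 : H -> H} :
  form_bounded f T1 -> form_bounded f T2 -> form_bounded f (T1 \- T2).
Proof. by move=> b1 /form_boundedN b2; exact: form_boundedD b1 b2. Qed.

Section BoundedOperator.
Variable T : {linear H -> H}.
Hypothesis boundedT : form_bounded f T.

Lemma omega_set_ubound :
  has_ubound [set Normc.normc (f (T x) x) | x in [set x | f x x = 1]].
Proof.
have [M leM] := boundedT.
exists (M + 1) => _ [x /= x1 <-]; rewrite -lecR rmorphD /=.
apply: le_trans (normr_form_le _ _) _; rewrite x1 lerD2r.
by apply: le_trans (leM x) _; rewrite x1 mulr1.
Qed.

Lemma normr_form_le_omega x : `|f (T x) x| <= (omega f T)%:C * f x x.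
Proof.
have [M leM] := boundedT.
have [x0 | xpos] := eqVneq (f x x) 0.
  have Tx0 : f (T x) (T x) = 0.
    by apply/le_anti; rewrite f_ge0 andbT -(mulr0 M%:C) -x0 leM.
  rewrite x0 mulr0; apply: le_trans (normr_form_le _ _) _.
  by rewrite Tx0 x0 addr0.
have fxx_gt0 : 0 < f x x by rewrite lt_def xpos f_ge0.
set s := sqrtC (f x x).
have s_gt0 : 0 < s by rewrite sqrtC_gt0.
have sVJ : s^-1^* = s^-1 by rewrite geC0_conj // invr_ge0 ltW.
have fZZ z1 z2 : f (s^-1 *: z1) (s^-1 *: z2) = f z1 z2 / f x x.
  by rewrite linearZl_LR linearZr_LR /= sVJ mulrA -invfM -expr2 sqrtCK mulrC.
set y := s^-1 *: x.
have y1 : f y y = 1 by rewrite fZZ divff ?gt_eqF.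
have -> : f (T x) x = f x x * f (T y) y.
  have -> : T y = s^-1 *: T x by rewrite linearZ.
  by rewrite fZZ mulrC divfK ?gt_eqF.
rewrite normrM ger0_norm ?f_ge0 // mulrC ler_wpM2r ?f_ge0 //.
have : Normc.normc (f (T y) y) <= omega f T.
  by rewrite /omega; apply: (ub_le_sup omega_set_ubound); exists y.
by rewrite -lecR.
Qed.

End BoundedOperator.

Lemma normr_offdiag_le_omega {Q R : {linear H -> H}} x1 x2 :
  form_bounded f Q -> form_bounded f R ->
  `|f (Q x2) x1 + f (R x1) x2| *+ 2
    <= (omega f (Q \+ R) + omega f (Q \- R))%:C * (f x1 x1 + f x2 x2).
Proof.
move=> bQ bR.
have c1 : 1 * 1^* = 1 :> K[i] by rewrite conjC1 mulr1.
have ci : 'i * 'i^* = 1 :> K[i] by rewrite conjCi mulrN mulCii opprK.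
have leF := normr_polarization_le x1 x2 (normr_form_le_omega _ (form_boundedD bQ bR)) c1.
have leG := normr_polarization_le x2 x1 (normr_form_le_omega _ (form_boundedB bQ bR)) ci.
rewrite conjC1 !mul1r in leF; rewrite [f x2 x2 + _]addrC in leG.
rewrite -normrMn.
have -> : (f (Q x2) x1 + f (R x1) x2) *+ 2
    = (f ((Q \+ R) x1) x2 + f ((Q \+ R) x2) x1)
      + 'i * ('i^* * f ((Q \- R) x2) x1 + 'i * f ((Q \- R) x1) x2).
  rewrite /= !(linearDl, linearNl) conjCi mulrDr !mulrA mulrN mulCii.
  ring.
apply: le_trans (ler_normD _ _) _.
rewrite normrM normCi mul1r rmorphD mulrDl; exact: lerD leF leG.
Qed.

Lemma omega_opmatrix_le (P Q R S : {linear H -> H}) :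
  form_bounded f P -> form_bounded f Q -> form_bounded f R -> form_bounded f S ->
  omega (fun x y : H * H => f x.1 y.1 + f x.2 y.2) (opmatrix P Q R S)
  <= Num.max (omega f P) (omega f S) + (omega f (Q \+ R) + omega f (Q \- R)) / 2.
Proof.
move=> bP bQ bR bS; set m := Num.max _ _; set w := omega f (Q \+ R) + _.
apply: omega_le => [|[x1 x2] /= x12].
  by rewrite addr_ge0 ?divr_ge0 ?addr_ge0 ?omega_ge0 // le_max omega_ge0.
have diag : `|f (P x1) x1 + f (S x2) x2| <= m%:C.
  rewrite -[m%:C]mulr1 -x12 mulrDr; apply: le_trans (ler_normD _ _) _.
  apply: lerD; [apply: le_trans (normr_form_le_omega _ bP x1) _
               | apply: le_trans (normr_form_le_omega _ bS x2) _];
    by rewrite ler_wpM2r ?f_ge0 // lecR le_max lexx ?orbT.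
have off : `|f (Q x2) x1 + f (R x1) x2| <= (w / 2)%:C.
  rewrite -(ler_pMn2r (n := 2)) // -[X in _ <= X]rmorphMn /= -mulr_natr divfK ?pnatr_eq0 //.
  by have := normr_offdiag_le_omega x1 x2 bQ bR; rewrite x12 mulr1.
rewrite !linearDl rmorphD.
have -> : forall a b c d : K[i], a + b + (c + d) = (a + d) + (b + c) by move=> *; ring.
exact: le_trans (ler_normD _ _) (lerD diag off).
Qed.

End SesquilinearForm.

Lemma ipA_is_bilinear {K : realType} {H : lmodType K[i]} {ip : H -> H -> K[i]} {A : H -> H} :
  inner_product ip -> linear A ->
  bilinear_for (GRing.Scale.Law.clone _ _ *%R _)
    (GRing.Scale.Law.clone _ _ (Num.conj \; *%R) _) (ipA ip A).
Proof.
case=> ip_linl ipJ _ _ linA; split=> [z a x y | z a x y]; rewrite /ipA.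
  by rewrite linA ip_linl.
by rewrite /= ipJ ip_linl rmorphD rmorphM /= -!ipJ.
Qed.

Lemma BA_half_form_bounded {K : realType} {H : lmodType K[i]} {ip : H -> H -> K[i]}
  {A T : H -> H} : positive_op ip A -> BA_half ip A T -> form_bounded (ipA ip A) T.
Proof.
move=> [_ A_ge0] [_ [l [_ le_l]]]; exists (l ^+ 2) => x; rewrite /ipA.
rewrite -(RRe_real (ger0_real (A_ge0 (T x)))) -(RRe_real (ger0_real (A_ge0 x))).
rewrite -rmorphM lecR; exact: le_l.
Qed.

Theorem theorem2p7 (K : realType) (H : lmodType K[i]) (ip : H -> H -> K[i])
  (hH : hilbert_space ip) (A : H -> H) (hA : positive_op ip A)
  (hA0 : exists x : H, A x <> 0)
  (P Q R S : H -> H)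
  (hP : BA_half ip A P) (hQ : BA_half ip A Q)
  (hR : BA_half ip A R) (hS : BA_half ip A S) :
  omega (ipAA ip A) (opmatrix P Q R S)
  <= Num.max (omega (ipA ip A) P) (omega (ipA ip A) S)
     + (omega (ipA ip A) (fun x => Q x + R x)
        + omega (ipA ip A) (fun x => Q x - R x)) / 2.
Proof.
have [[[linA _] A_ge0] [ip_inner _]] := (hA, hH).
pose f : {bilinear H -> H -> K[i] | *%R & Num.conj \; *%R} :=
  HB.pack (ipA ip A) (bilinear_isBilinear.Build _ _ _ _ _ _ _ (ipA_is_bilinear ip_inner linA)).
pose lin T (hT : BA_half ip A T) : {linear H -> H} :=
  HB.pack T (GRing.isLinear.Build _ _ _ _ T hT.1.1).
exact: (@omega_opmatrix_le _ _ f A_ge0 (lin P hP) (lin Q hQ) (lin R hR) (lin S hS)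
  (BA_half_form_bounded hA hP) (BA_half_form_bounded hA hQ)
  (BA_half_form_bounded hA hR) (BA_half_form_bounded hA hS)).
Qed.
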